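(* Let $k\ge r\ge3$ and $m\ge0$ be integers. Let $\pi$ be a partition in $\mathbb{C}(k,r)$ with no odd parts, and let $N_2=N_2(\pi)$ be the number of parts marked $2$ in $GG(\pi)$. Then $\pi\in\mathbb{C}_{<}(k,r|m)$ if and only if $m\ge N_2$.
   Context: A partition $\pi=(\pi_1,\dots,\pi_\ell)$ is a finite non-increasing sequence of positive integers; ''$a$ occurs in $\pi$'' means $a=\pi_i$ for some $i$. Göllnitz–Gordon marking: $GG(\pi)$ assigns a positive integer (mark) to each part, processing the parts from smallest to largest; $\pi_i$ receives the smallest positive integer different from the marks of all parts $\pi_g$ with $g>i$ and $\pi_i-\pi_g\le 2$, where $\pi_i-\pi_g<2$ is required when $\pi_i$ is odd. An ''$r$-marked part $a$'' is a part equal to $a$ with mark $r$. $N_i(\pi)$ is the number of parts with mark $i$; $\pi^{(i)}_1\ge\dots\ge\pi^{(i)}_{N_i(\pi)}$ are the parts with mark $i$, with $\pi^{(i)}_0=+\infty$, $\pi^{(i)}_{N_i(\pi)+1}=-\infty$. $\mathbb{C}(k,r)$: partitions with (i) no odd part repeated; (ii) $\pi_i\ge\pi_{i+k-1}+2$ for $1\le i\le\ell-k+1$, strict if $\pi_i$ even; (iii) at most $r-1$ parts $\le 2$. Starting types: for $\pi\in\mathbb{C}(k,r)$ with $N_2=N_2(\pi)\ge1$, let $l$ be the largest integer in $\{0,\dots,N_2\}$ such that no odd part of $\pi$ is $\ge\pi^{(2)}_l$; for $l<i\le N_2$, $\pi^{(2)}_i$ has type $s_{-1}$. For $b=1,\dots,l$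 in increasing order, type and auxiliary $\sigma_b$: for $b=1$: Case 1: 1-marked part $\pi^{(2)}_1-1$ exists and $\pi^{(2)}_1+2$ does not occur: type $s_0$, $\sigma_1=\pi^{(2)}_1-1$; Case 2: 1-marked $\pi^{(2)}_1-2$ exists and $\pi^{(2)}_1+2$ does not occur: type $s_1$, $\sigma_1=\pi^{(2)}_1-2$; Case 3: 1-marked $\pi^{(2)}_1+2$ exists: type $s_2$, $\sigma_1=\pi^{(2)}_1+2$; Case 4: 1-marked $\pi^{(2)}_1$ exists: type $s_3$, $\sigma_1=\pi^{(2)}_1$. For $2\le b\le l$: Case 1: 1-marked $\pi^{(2)}_b-1$ exists and, if a 1-marked $\pi^{(2)}_b+2$ exists, $\sigma_{b-1}=\pi^{(2)}_b+2$: type $s_0$, $\sigma_b=\pi^{(2)}_b-1$; Case 2: same with $\pi^{(2)}_b-2$: type $s_1$, $\sigma_b=\pi^{(2)}_b-2$; Case 3: 1-marked $\pi^{(2)}_b+2$ exists and $\sigma_{b-1}\ne\pi^{(2)}_b+2$: type $s_2$, $\sigma_b=\pi^{(2)}_b+2$; Case 4: 1-marked $\pi^{(2)}_b$ exists: type $s_3$, $\sigma_b=\pi^{(2)}_b$. $\mathbb{C}_{<}(k,r|p,t)$ (for $p,t\ge 0$): the set of $\pi\in\mathbb{C}(k,r)$ such that (1) no odd part is $\ge 2t+1$; (2) $\pi^{(2)}_{p+1}<2t+1<\pi^{(2)}_p$ (in particular $p\le N_2(\pi)$); (3) if $\pi^{(2)}_p=2t+2$ then it is of starting type $s_2$ or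 $s_3$; (4) if $\pi^{(2)}_{p+1}=2t$ then it is of starting type $s_0$ or $s_1$. For $m\ge0$, $\mathbb{C}_{<}(k,r|m)=\bigcup_{p,t\ge0,\ p+t=m}\mathbb{C}_{<}(k,r|p,t)$. *)

From mathcomp Require Import all_boot.
Set Implicit Arguments. Unset Strict Implicit. Unset Printing Implicit Defensive.

(* A partition is a finite non-increasing sequence of positive integers,
   represented as a seq nat [pi_1; ...; pi_l] (0-based in Rocq). *)
Definition is_partition (s : seq nat) : bool :=
  sorted geq s && all (fun x => 0 < x) s.

Definition mex1 (L : seq nat) : nat :=
  (find (fun n => n \notin L) (iota 1 (size L).+1)).+1.

(* Parts are processed from the smallest (end of the list) to the largest;
   part x (at position i) gets the smallest positive integer different from
   the marks of all later parts y (g > i) with x - y <= 2, resp. x - y < 2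
   when x is odd.  (For a non-increasing list y <= x, so x <= y + 2 is
   x - y <= 2.) *)
Fixpoint gg (s : seq nat) : seq nat :=
  match s with
  | [::] => [::]
  | x :: s' =>
      let ms := gg s' in
      let close y := if odd x then x < y + 2 else x <= y + 2 in
      mex1 [seq q.2 | q <- zip s' ms & close q.1] :: ms
  end.

Definition marked (i : nat) (s : seq nat) : seq nat :=
  [seq q.1 | q <- zip s (gg s) & q.2 == i].

Definition Nmark (i : nat) (s : seq nat) : nat := size (marked i s).

(* pi^{(2)}_j for 1 <= j <= N_2 (1-based) *)
Definition pi2 (s : seq nat) (j : nat) : nat := nth 0 (marked 2 s) j.-1.

Definition has_marked (s : seq nat) (r a : nat) : bool := (a, r) \in zip s (gg s).

Definition inC (k r : nat) (s : seq nat) : Prop :=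
  is_partition s /\
  (forall x, odd x -> count_mem x s <= 1) /\
  (forall i, i + k - 1 < size s ->
      nth 0 s (i + k - 1) + 2 <= nth 0 s i /\
      (~~ odd (nth 0 s i) -> nth 0 s (i + k - 1) + 2 < nth 0 s i)) /\
  count (fun x => x <= 2) s <= r - 1.

Inductive stype := s_m1 | s_0 | s_1 | s_2 | s_3 | s_none.


(* l: the largest j in {0..N_2} such that no odd part is >= pi^{(2)}_j
   (with pi^{(2)}_0 = +oo). *)
Definition okl (s : seq nat) (j : nat) : bool :=
  (j == 0) || all (fun x => odd x ==> (x < pi2 s j)) s.

Definition lidx (s : seq nat) : nat :=
  last 0 [seq j <- iota 0 (Nmark 2 s).+1 | okl s j].

(* The four cases are tried in the order 1, 2, 3, 4 (they are mutually
   exclusive for genuine GG-markings); s_none if no case applies. *)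
Fixpoint stype_sigma (s : seq nat) (b : nat) : stype * nat :=
  match b with
  | 0 => (s_none, 0)
  | b'.+1 =>
      let x := pi2 s b in
      match b' with
      | 0 =>
          if has_marked s 1 (x - 1) && (x + 2 \notin s) then (s_0, x - 1)
          else if has_marked s 1 (x - 2) && (x + 2 \notin s) then (s_1, x - 2)
          else if has_marked s 1 (x + 2) then (s_2, x + 2)
          else if has_marked s 1 x then (s_3, x)
          else (s_none, 0)
      | _ =>
          let sig := (stype_sigma s b').2 in
          let cond := has_marked s 1 (x + 2) ==> (sig == x + 2) in
          if has_marked s 1 (x - 1) && cond then (s_0, x - 1)
          else if has_marked s 1 (x - 2) && cond then (s_1, x - 2)
          else if has_marked s 1 (x + 2) && (sig != x + 2) then (s_2, x + 2)
          else if has_marked s 1 x then (s_3, x)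
          else (s_none, 0)
      end
  end.

Definition start_type (s : seq nat) (b : nat) : stype :=
  if b <= lidx s then (stype_sigma s b).1 else s_m1.

Definition inClt (k r p t : nat) (s : seq nat) : Prop :=
  inC k r s /\
  (forall x, x \in s -> odd x -> x < 2 * t + 1) /\
  (* (2) pi2_{p+1} < 2t+1 < pi2_p, with pi2_0 = +oo, pi2_{N2+1} = -oo *)
  p <= Nmark 2 s /\
  (p = 0 \/ 2 * t + 1 < pi2 s p) /\
  (p = Nmark 2 s \/ pi2 s p.+1 < 2 * t + 1) /\
  (1 <= p -> pi2 s p = 2 * t + 2 ->
     start_type s p = s_2 \/ start_type s p = s_3) /\
  (p.+1 <= Nmark 2 s -> pi2 s p.+1 = 2 * t ->
     start_type s p.+1 = s_0 \/ start_type s p.+1 = s_1).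

Definition inClt_m (k r m : nat) (s : seq nat) : Prop :=
  exists p t, p + t = m /\ inClt k r p t s.

(* With no odd parts the Goellnitz-Gordon marking is rigid.  Two 2-marked parts
   are more than 2 apart, and a 2-marked part x has a 1-marked part at x or
   x - 2 (and at x or x + 2 if x + 2 occurs), which forces every pi^(2)_b to
   have one of the starting types s_0, ..., s_3; moreover l = N_2.
   Being even, positive and more than 2 apart, the 2-marked parts satisfy
   pi^(2)_(p+1) >= 2 (N_2 - p), so pi^(2)_(p+1) < 2t + 1 forces N_2 <= p + t.
   Conversely, for m >= N_2 take the largest p with pi^(2)_p >= 2 (m - p) + 2
   and t = m - p: condition (4) is vacuous, and if (3) fails, i.e.
   pi^(2)_p = 2t + 2 has type s_0 or s_1, then (p - 1, t + 1) works instead,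
   pi^(2)_p now being the boundary case of (4).
   Only the partition property of C(k,r) is used; the bounds on k, r are not. *)

From mathcomp Require Import all_boot zify.

Set Implicit Arguments.
Unset Strict Implicit.
Unset Printing Implicit Defensive.

Definition close (x y : nat) : bool := if odd x then x < y + 2 else x <= y + 2.

Definition close_marks (x : nat) (s : seq nat) : seq nat :=
  [seq q.2 | q <- zip s (gg s) & close x q.1].

Definition head_mark (x : nat) (s : seq nat) : nat := mex1 (close_marks x s).

Lemma gg_cons x s : gg (x :: s) = head_mark x s :: gg s.
Proof. by []. Qed.

Lemma size_gg s : size (gg s) = size s.
Proof. by elim: s => //= x s ->. Qed.

Lemma mex1_notin L : mex1 L \notin L.
Proof.
rewrite /mex1; set P := fun n => n \notin L.
have hasP : has P (iota 1 (size L).+1).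
  apply/negPn/negP => /hasPn allL.
  have sub : {subset iota 1 (size L).+1 <= L} by move=> y /allL /negPn.
  by have := uniq_leq_size (iota_uniq 1 (size L).+1) sub; rewrite size_iota ltnn.
have := nth_find 0 hasP; rewrite nth_iota ?add1n //.
by move: hasP; rewrite has_find size_iota.
Qed.

Lemma mex1_eq1 L : (mex1 L == 1) = (1 \notin L).
Proof. by rewrite /mex1 /=; case: ifP. Qed.

Lemma has_marked_cons x s c v :
  has_marked (x :: s) c v = ((v == x) && (c == head_mark x s)) || has_marked s c v.
Proof. by rewrite /has_marked gg_cons /= in_cons xpair_eqE. Qed.

Lemma marked_cons c x s :
  marked c (x :: s) = if head_mark x s == c then x :: marked c s else marked c s.
Proof. by rewrite /marked gg_cons /=; case: ifP. Qed.

Lemma mem_marked c s v : (v \in marked c s) = has_marked s c v.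
Proof.
apply/mapP/idP => [[[y d]]|hv]; last by exists (v, c); rewrite // mem_filter /= eqxx.
by rewrite mem_filter /= => /andP[/eqP -> ?] ->.
Qed.

Lemma has_marked_mem s c v : has_marked s c v -> v \in s.
Proof. by move/(map_f fst); rewrite -[map _ _]/(unzip1 _) unzip1_zip ?size_gg. Qed.

Lemma has_marked_exists s v : v \in s -> exists c, has_marked s c v.
Proof.
rewrite -[s in v \in s](@unzip1_zip _ _ s (gg s)) ?size_gg //.
by case/mapP => [[y c] hyc /= ->]; exists c.
Qed.

Lemma close_marksP x s c :
  reflect (exists2 y, has_marked s c y & close x y) (c \in close_marks x s).
Proof.
apply: (iffP mapP) => [[[y d]]|[y hy hxy]].
  by rewrite mem_filter /= => /andP[hxy hy] ->; exists y.
by exists (y, c); rewrite // mem_filter /= hxy.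
Qed.

Lemma head_mark_neq x s c y :
  has_marked s c y -> close x y -> head_mark x s != c.
Proof.
move=> hy hxy; apply: contraNneq (mex1_notin (close_marks x s)) => hc.
by apply/close_marksP; exists y; rewrite // -hc in hy.
Qed.

Lemma head_mark_neq1 x s :
  head_mark x s != 1 -> exists2 y, has_marked s 1 y & close x y.
Proof. by rewrite /head_mark mex1_eq1 negbK => /close_marksP. Qed.

Lemma pairwise_marked c s : pairwise (fun a b => ~~ close a b) (marked c s).
Proof.
elim: s => //= x s IH; rewrite marked_cons; case: eqP => // hx.
rewrite pairwise_cons IH andbT; apply/allP => y; rewrite mem_marked => hy.
by apply: contraL (head_mark_neq hy) _; apply/eqP.
Qed.

Lemma mark1_below s c v : sorted geq s -> has_marked s c v -> c != 1 ->
  exists2 y, has_marked s 1 y & y <= v <= y + 2.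
Proof.
elim: s => //= x s IH x_s; rewrite has_marked_cons.
case/orP => [/andP[/eqP -> /eqP ->] /head_mark_neq1 [y hy hxy] | hv c1].
  exists y; first by rewrite has_marked_cons hy orbT.
  have yx : y <= x.
    exact: allP (order_path_min (rev_trans leq_trans) x_s) y (has_marked_mem hy).
  by move: hxy; rewrite yx /close; case: odd => //; apply: ltnW.
have [y hy hyv] := IH (path_sorted x_s) hv c1.
by exists y; rewrite // has_marked_cons hy orbT.
Qed.

Lemma mark1_below_even s c v : sorted geq s -> all (fun x => ~~ odd x) s ->
  has_marked s c v -> c != 1 -> has_marked s 1 v || has_marked s 1 (v - 2).
Proof.
move=> s_sorted s_even hv c1; have [y hy yv] := mark1_below s_sorted hv c1.
have ev := allP s_even v (has_marked_mem hv).
have ey := allP s_even y (has_marked_mem hy).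
have : (y == v) || (y == v - 2) by lia.
by case/orP => /eqP <-; rewrite hy ?orbT.
Qed.

Lemma gap2_nth_lower_bound (M : seq nat) i :
  pairwise (fun a b => b + 2 <= a) M -> all (leq 2) M -> i < size M ->
  2 * (size M - i) <= nth 0 M i.
Proof.
elim: M i => // a M IH [|i] /= => /andP[aM pM] /andP[a2 M2] ilt.
  case: M => [|b M] in IH aM pM M2 ilt *; first by rewrite muln1.
  by have := IH 0 pM M2 isT; move: aM => /andP[ba _] /=; lia.
by have := IH i pM M2 ilt; rewrite subSS.
Qed.

Section EvenPartition.

Variables (k r : nat) (s : seq nat).
Hypotheses (sC : inC k r s) (s_even : forall x, x \in s -> ~~ odd x).

Local Notation N := (Nmark 2 s).

Let s_sorted : sorted geq s. Proof. by case: sC => /andP[]. Qed.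

Let all_even : all (fun x => ~~ odd x) s. Proof. exact/allP. Qed.

Lemma lidx_even : lidx s = N.
Proof.
have okT : okl s =1 predT.
  by move=> j; rewrite /okl; apply/orP; right; apply/allP => x /s_even/negbTE ->.
by rewrite /lidx (eq_filter okT) filter_predT -addn1 iotaD last_cat.
Qed.

Lemma pairwise_pi2 : pairwise (fun a b => b + 2 < a) (marked 2 s).
Proof.
have marked_even : all (fun x => ~~ odd x) (marked 2 s).
  by apply/allP => x; rewrite mem_marked => /has_marked_mem/s_even.
apply: (sub_in_pairwise _ marked_even (pairwise_marked 2 s)) => a b ea _.
by rewrite /close (negbTE ea) -ltnNge.
Qed.

Lemma pi2_gap j : 0 < j < N -> pi2 s j.+1 + 2 < pi2 s j.
Proof.
case: j => // j /andP[_ jN].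
by apply: (pairwiseP 0 pairwise_pi2); rewrite ?inE // ltnW.
Qed.

Lemma pi2_lower_bound j : j < N -> 2 * (N - j) <= pi2 s j.+1.
Proof.
apply: gap2_nth_lower_bound.
  exact: sub_pairwise (fun a b => @ltnW (b + 2) a) pairwise_pi2.
apply/allP => x; rewrite mem_marked => /has_marked_mem xs.
by have := s_even xs; case: sC => /andP[_ /allP/(_ x xs)]; lia.
Qed.

Lemma start_type_cases b : 0 < b <= N ->
  (start_type s b = s_2 \/ start_type s b = s_3) \/
  (start_type s b = s_0 \/ start_type s b = s_1).
Proof.
rewrite /start_type lidx_even => /andP[b0 bN]; rewrite bN.
have hx : has_marked s 2 (pi2 s b) by rewrite -mem_marked /pi2 mem_nth ?prednK.
have below := mark1_below_even s_sorted all_even hx isT.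
have above : pi2 s b + 2 \in s ->
    has_marked s 1 (pi2 s b) || has_marked s 1 (pi2 s b + 2).
  case/has_marked_exists => c hc.
  have [c1|/(mark1_below_even s_sorted all_even hc)] := eqVneq c 1.
    by rewrite c1 in hc; rewrite hc orbT.
  by rewrite addnK orbC.
(* [below] and [above] rule out every branch of [stype_sigma] ending in s_none. *)
case: b b0 bN hx below above => [|[|b]] //= _ _ _.
  by do 4 case: (has_marked s 1 _); case: (_ \in s); move=> /=; intuition.
by do 4 case: (has_marked s 1 _); case: eqP; move=> /=; intuition.
Qed.

Lemma Nmark_le_of_inClt p t : inClt k r p t s -> N <= p + t.
Proof.
case=> _ [_ [pN [_ [[->|below] _]]]]; first exact: leq_addr.
have [pltN|] := ltnP p N; last by lia.
by have := pi2_lower_bound pltN; lia.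
Qed.

Lemma inClt_of_pi2_lt p t : p <= N ->
  (p = 0 \/ 2 * t + 2 <= pi2 s p) -> (p < N -> pi2 s p.+1 < 2 * t) ->
  (0 < p -> pi2 s p = 2 * t + 2 -> start_type s p = s_2 \/ start_type s p = s_3) ->
  inClt k r p t s.
Proof.
move=> pN above below type_p; do 2 split=> //; first by move=> x /s_even/negbTE ->.
split=> //; split; first by case: above => [->|?]; [left | right; lia].
split; first by have [/below ?|?] := ltnP p N; [right; lia | left; lia].
by split=> // /below ?; lia.
Qed.

Lemma inClt_of_pi2_eq p t : p < N -> pi2 s p.+1 = 2 * t ->
  (start_type s p.+1 = s_0 \/ start_type s p.+1 = s_1) -> inClt k r p t s.
Proof.
move=> pN at_p1 type_p1; do 2 split=> //; first by move=> x /s_even/negbTE ->.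
have gap : 0 < p -> 2 * t + 2 < pi2 s p by move=> p0; rewrite -at_p1 pi2_gap ?p0.
split; first exact: ltnW.
split; first by case: (posnP p) => [|/gap]; [left | right; lia].
split; first by right; lia.
by split=> // p0 at_p; have := gap p0; lia.
Qed.

Lemma inClt_m_of_Nmark_le m : N <= m -> inClt_m k r m s.
Proof.
move=> Nm; pose P p := (p <= N) && ((p == 0) || (2 * (m - p) + 2 <= pi2 s p)).
have ubP p : P p -> p <= N by case/andP.
have [p0 /andP[p0N above] p0_max] := ex_maxnP (ex_intro P 0 isT) ubP.
have below : p0 < N -> pi2 s p0.+1 < 2 * (m - p0).
  move=> ltN; have := contraNN (p0_max p0.+1); rewrite ltnn => /(_ isT).
  by rewrite /P ltN /=; lia.
have at_p0 : (0 < p0 -> pi2 s p0 = 2 * (m - p0) + 2 ->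
    start_type s p0 = s_2 \/ start_type s p0 = s_3) -> inClt_m k r m s.
  move=> type_p0; exists p0, (m - p0); split; first lia.
  by apply: inClt_of_pi2_lt => //; case/orP: above => [/eqP|]; auto.
have [/andP[p0_pos /eqP at_bound]|off_bound] :=
  boolP ((0 < p0) && (pi2 s p0 == 2 * (m - p0) + 2)); last first.
  by apply: at_p0 => p0_pos at_bound; move: off_bound; rewrite p0_pos at_bound eqxx.
have p0_range : 0 < p0 <= N by rewrite p0_pos.
have [types23|types01] := start_type_cases p0_range.
  exact: at_p0.
exists p0.-1, (m - p0).+1; split; first lia.
by apply: inClt_of_pi2_eq; rewrite prednK //; lia.
Qed.

End EvenPartition.

Theorem theorem5p3 (k r m : nat) (s : seq nat) :
  3 <= r -> r <= k ->
  inC k r s ->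
  (forall x, x \in s -> ~~ odd x) ->
  (inClt_m k r m s <-> Nmark 2 s <= m).
Proof.
move=> _ _ sC s_even; split; last exact: inClt_m_of_Nmark_le.
by case=> p [t [<- /(Nmark_le_of_inClt sC s_even)]].
Qed.
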